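(* Let $0<\delta<2$, $\eta=2\delta-\delta^2$. If $\mu_1<1$ choose $0<\zeta<\frac{4\eta\mu_1}{(1-\mu_1)^2}$; otherwise choose any $\zeta>0$. Set $\gamma=\sqrt{\zeta\eta\mu_1}$, $\alpha=\frac{\eta}{\eta+\gamma}$, and $\omega=1-\frac{\zeta\mu_1^2+2\gamma\mu_1-\zeta\mu_1}{1+\zeta\mu_1^2}$. Let $\{x_k\},\{v_k\}$ be generated by the PASKM method (defined in the context) from $x_0$ with these parameters. Then $\{v_k\},\{x_k\}$ converge and for all $k\ge0$ $$\mathbb{E}\big[d(v_{k+1},P)^2+\zeta\mu_1 d(x_{k+1},P)^2\big]\le\omega^{k+1}\,\mathbb{E}\big[d(v_0,P)^2+\zeta\mu_1 d(x_0,P)^2\big]=(1+\zeta\mu_1)\,\omega^{k+1}d(x_0,P)^2;$$ i.e., PASKM converges linearly with rate $\omega$.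
   Context: Let $A\in\mathbb{R}^{m\times n}$ have rows $a_1^T,\dots,a_m^T$ with $\|a_i\|_2=1$, and $b\in\mathbb{R}^m$; assume $Ax\le b$ is consistent and let $P=\{x:Ax\le b\}$, $\mathcal{P}(x)$ the Euclidean projection onto $P$, $d(x,P)=\|x-\mathcal{P}(x)\|$, $t^+=\max\{t,0\}$. Fix an integer $1\le\beta\le m$. Let $L>0$ be a Hoffman constant ($d(x,P)^2\le L^2\|(Ax-b)^+\|^2$ for all $x$) and $\mu_1=\frac1{mL^2}$. PASKM method (parameters $\beta,\delta,\alpha,\omega,\gamma$): given $x_0$, set $v_0=x_0$. For $k=0,1,\dots$: $y_k=\alpha v_k+(1-\alpha)x_k$; choose $\tau_k\subseteq\{1,\dots,m\}$ with $|\tau_k|=\beta$ uniformly at random, independently; let $i^*_k\in\tau_k$ maximize $(a_i^Ty_k-b_i)^+$; with $r_k=(a_{i^*_k}^Ty_k-b_{i^*_k})^+$ set $x_{k+1}=y_k-\delta r_k a_{i^*_k}$ and $v_{k+1}=\omega v_k+(1-\omega)y_k-\gamma r_k a_{i^*_k}$. $\mathbb{E}$ denotes total expectation. *)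

From HB Require Import structures.
From mathcomp Require Import all_boot all_order all_algebra.
From mathcomp Require Import all_classical all_reals.
From mathcomp Require Import topology normedtype sequences.
Set Implicit Arguments. Unset Strict Implicit. Unset Printing Implicit Defensive.
Import Order.TTheory GRing.Theory Num.Theory.
Local Open Scope ring_scope.
Local Open Scope classical_set_scope.

Section PASKM.
Variables (R : realType) (m n : nat).

Definition pos (t : R) : R := Num.max t 0.

Definition norm2 (x : 'cV[R]_n) : R := Num.sqrt (\sum_j x j 0 ^+ 2).

Definition polyhedron (A : 'M[R]_(m, n)) (b : 'cV[R]_m) : set 'cV[R]_n :=
  [set x | forall i, (A *m x) i 0 <= b i 0].

Definition distP (A : 'M[R]_(m, n)) (b : 'cV[R]_m) (x : 'cV[R]_n) : R :=
  inf [set norm2 (x - y) | y in polyhedron A b].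

Definition posres2 (A : 'M[R]_(m, n)) (b : 'cV[R]_m) (x : 'cV[R]_n) : R :=
  \sum_i pos ((A *m x - b) i 0) ^+ 2.

Definition arow (A : 'M[R]_(m, n)) (i : 'I_m) : 'cV[R]_n := (row i A)^T.

(* one PASKM step from state (x_k, v_k), given the sampled set tau_k and
   the index selection rule sel (returning i*_k) *)
Definition paskm_step (A : 'M[R]_(m, n)) (b : 'cV[R]_m)
  (delta alpha omega gamma : R)
  (sel : nat -> {set 'I_m} -> 'cV[R]_n -> 'I_m)
  (k : nat) (tau : {set 'I_m}) (st : 'cV[R]_n * 'cV[R]_n)
  : 'cV[R]_n * 'cV[R]_n :=
  let x := st.1 in let v := st.2 in
  let y := alpha *: v + (1 - alpha) *: x in
  let i := sel k tau y in
  let r := pos ((A *m y - b) i 0) in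
  (y - (delta * r) *: arow A i,
   omega *: v + (1 - omega) *: y - (gamma * r) *: arow A i).

Fixpoint paskm_traj (A : 'M[R]_(m, n)) (b : 'cV[R]_m)
  (delta alpha omega gamma : R)
  (sel : nat -> {set 'I_m} -> 'cV[R]_n -> 'I_m)
  (x0 : 'cV[R]_n) (s : nat -> {set 'I_m}) (k : nat)
  : 'cV[R]_n * 'cV[R]_n :=
  match k with
  | 0 => (x0, x0)
  | k'.+1 => paskm_step A b delta alpha omega gamma sel k' (s k')
               (paskm_traj A b delta alpha omega gamma sel x0 s k')
  end.

Definition bsubset (beta : nat) := {tau : {set 'I_m} | #|tau| == beta}.

Definition ext_sample (beta K : nat) (s : {ffun 'I_K -> bsubset beta})
  (j : nat) : {set 'I_m} :=
  match insub j with Some j' => val (s j') | None => finset.set0 end.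

(* total expectation of f(x_K, v_K): tau_0, ..., tau_{K-1} are independent
   and uniform over the beta-subsets, i.e. uniform over the product *)
Definition paskm_E (A : 'M[R]_(m, n)) (b : 'cV[R]_m) (beta : nat)
  (delta alpha omega gamma : R)
  (sel : nat -> {set 'I_m} -> 'cV[R]_n -> 'I_m)
  (x0 : 'cV[R]_n) (K : nat) (f : 'cV[R]_n * 'cV[R]_n -> R) : R :=
  (\sum_(s : {ffun 'I_K -> bsubset beta})
      f (paskm_traj A b delta alpha omega gamma sel x0 (ext_sample s) K))
  / #|{ffun 'I_K -> bsubset beta}|%:R.

End PASKM.

(* The proof is a Lyapunov argument for Phi(x, v) = d(v,P)^2 + c d(x,P)^2 with
   c = zeta mu1.  Fix an index i, write r = (a_i^T y - b_i)^+ and compare the new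
   iterates with convex combinations of points qv, qy of P close to the
   projections of v and y: since a_i^T qv, a_i^T qy <= b_i, the residual r bounds
   a_i^T (y - qy) and, through the momentum relation v - y = (gamma/eta)(y - x),
   also a_i^T (v - qv) from below.  This yields
     d(v')^2 + c d(x')^2 <= omega d(v)^2 + (1 - omega + c) d(y)^2
                            - (2 gamma + c omega) r^2 + c omega d(x)^2.
   For the greedy index of a uniform beta-subset, double counting gives
   E r^2 >= ||(Ay - b)^+||^2 / m >= mu1 d(y)^2 by the Hoffman bound, and the
   parameters satisfy (2 gamma + c omega) mu1 = 1 - omega + c, so the d(y)
   terms cancel and E Phi contracts by the factor omega < 1. *)

From HB Require Import structures.
From mathcomp Require Import all_boot all_order all_algebra all_fingroup.
From mathcomp Require Import all_classical all_reals.
From mathcomp Require Import topology normedtype sequences.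
From mathcomp Require Import ring lra.
Import Order.TTheory GRing.Theory Num.Theory numFieldNormedType.Exports.
Set Implicit Arguments. Unset Strict Implicit. Unset Printing Implicit Defensive.
Local Open Scope ring_scope.
Local Open Scope classical_set_scope.

Section DotProduct.
Variables (R : realType) (n : nat).
Implicit Types (u w z a : 'cV[R]_n) (t : R).

Definition dot u w : R := \sum_j u j 0 * w j 0.
Definition sqnorm u : R := dot u u.

Lemma dotC u w : dot u w = dot w u.
Proof. by apply: eq_bigr => j _; rewrite mulrC. Qed.

Lemma dotDr u w z : dot u (w + z) = dot u w + dot u z.
Proof. by rewrite /dot -big_split; apply: eq_bigr => j _; rewrite !mxE mulrDr. Qed.

Lemma dotZr u w t : dot u (t *: w) = t * dot u w.
Proof. by rewrite /dot mulr_sumr; apply: eq_bigr => j _; rewrite !mxE mulrCA. Qed.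

Lemma dotNr u w : dot u (- w) = - dot u w.
Proof. by rewrite -scaleN1r dotZr mulN1r. Qed.

Lemma dotBr u w z : dot u (w - z) = dot u w - dot u z.
Proof. by rewrite dotDr dotNr. Qed.

Lemma dotDl u w z : dot (w + z) u = dot w u + dot z u.
Proof. by rewrite dotC dotDr !(dotC u). Qed.

Lemma dotZl u w t : dot (t *: w) u = t * dot w u.
Proof. by rewrite dotC dotZr dotC. Qed.

Lemma dotBl u w z : dot (w - z) u = dot w u - dot z u.
Proof. by rewrite dotC dotBr !(dotC u). Qed.

Lemma sqnorm_ge0 u : 0 <= sqnorm u.
Proof. by apply: sumr_ge0 => j _; rewrite -expr2 sqr_ge0. Qed.

Lemma sqr_norm2 u : norm2 u ^+ 2 = sqnorm u.
Proof.
rewrite /norm2 sqr_sqrtr; last by apply: sumr_ge0 => j _; rewrite sqr_ge0.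
by apply: eq_bigr => j _; rewrite expr2.
Qed.

Lemma norm2_ge0 u : 0 <= norm2 u.
Proof. exact: sqrtr_ge0. Qed.

Lemma sqnormB u w : sqnorm (u - w) = sqnorm u - 2 * dot u w + sqnorm w.
Proof. rewrite /sqnorm !dotBr !dotBl (dotC w u); ring. Qed.

Lemma sqnormZ u t : sqnorm (t *: u) = t ^+ 2 * sqnorm u.
Proof. by rewrite /sqnorm dotZl dotZr mulrA expr2. Qed.

Lemma sqnorm_convex u w t : 0 <= t <= 1 ->
  sqnorm (t *: u + (1 - t) *: w) <= t * sqnorm u + (1 - t) * sqnorm w.
Proof.
move=> /andP[t0 t1]; have t1' : 0 <= 1 - t by rewrite subr_ge0.
have := mulr_ge0 (mulr_ge0 t0 t1') (sqnorm_ge0 (u - w)).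
rewrite sqnormB /sqnorm !(dotDl, dotDr, dotBl, dotBr, dotZl, dotZr) (dotC w u).
move=> h; nra.
Qed.

Lemma sqnorm_subZ_unit a w t : sqnorm a = 1 ->
  sqnorm (w - t *: a) = sqnorm w - 2 * t * dot a w + t ^+ 2.
Proof. by move=> ha; rewrite sqnormB dotZr sqnormZ ha (dotC w a) mulr1 mulrA. Qed.

Lemma dot_unit_le_norm2 a z : sqnorm a = 1 -> dot a z <= norm2 z.
Proof.
move=> ha; have := sqnorm_ge0 (z - dot a z *: a).
rewrite sqnorm_subZ_unit // -sqr_norm2 => h.
have [hd|hd] := lerP (dot a z) 0; first exact: le_trans hd (norm2_ge0 z).
by rewrite -ler_sqr ?nnegrE ?norm2_ge0 ?(ltW hd) //; nra.
Qed.

End DotProduct.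

Lemma pos_ge0 (R : realType) (t : R) : 0 <= pos t.
Proof. by rewrite /pos le_max lexx orbT. Qed.

Lemma le_pos (R : realType) (t : R) : t <= pos t.
Proof. by rewrite /pos le_max lexx. Qed.

Lemma pos_mul_id (R : realType) (t : R) : pos t * t = pos t ^+ 2.
Proof. by rewrite /pos expr2; have [t0|t0] := leP t 0; rewrite ?mul0r. Qed.

Section Polyhedron.
Variables (R : realType) (m n : nat) (A : 'M[R]_(m, n)) (b : 'cV[R]_m).
Implicit Types (z q : 'cV[R]_n).
Local Notation P := (polyhedron A b).
Local Notation d := (distP A b).

Lemma mulmx_arow z i : (A *m z) i 0 = dot (arow A i) z.
Proof. by rewrite mxE; apply: eq_bigr => j _; rewrite !mxE. Qed.

Lemma residualE z i : (A *m z - b) i 0 = dot (arow A i) z - b i 0.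
Proof. by rewrite -mulmx_arow !mxE. Qed.

Lemma polyhedron_convex q1 q2 t : P q1 -> P q2 -> 0 <= t <= 1 ->
  P (t *: q1 + (1 - t) *: q2).
Proof.
move=> h1 h2 /andP[t0 t1] i; have t1' : 0 <= 1 - t by rewrite subr_ge0.
have := ler_wpM2l t0 (h1 i); have := ler_wpM2l t1' (h2 i).
by rewrite mulmxDr -!scalemxAr !mxE; lra.
Qed.

Hypothesis P_nonempty : exists q, P q.

Let dist_set z := [set norm2 (z - q) | q in P].

Let dist_set_nonempty z : dist_set z !=set0.
Proof. by case: P_nonempty => q hq; exists (norm2 (z - q)); exists q. Qed.

Lemma distP_ge0 z : 0 <= d z.
Proof.
by apply: lb_le_inf => [|_ [q _ <-]]; [exact: dist_set_nonempty | exact: norm2_ge0].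
Qed.

Lemma sqr_distP_le z q : P q -> d z ^+ 2 <= sqnorm (z - q).
Proof.
move=> hq; rewrite -sqr_norm2 ler_sqr ?nnegrE ?distP_ge0 ?norm2_ge0 //.
by apply: ge_inf; [exists 0 => _ [y _ <-]; exact: norm2_ge0 | exists q].
Qed.

Lemma distP_approx z e : 0 < e -> exists2 q, P q & sqnorm (z - q) <= d z ^+ 2 + e.
Proof.
move=> e0; have d2e0 : 0 <= d z ^+ 2 + e by rewrite addr_ge0 ?sqr_ge0 ?ltW.
have : d z < Num.sqrt (d z ^+ 2 + e).
  by rewrite -ltr_sqr ?nnegrE ?distP_ge0 ?sqrtr_ge0 // sqr_sqrtr // ltrDl.
case/(inf_lt (dist_set_nonempty z)) => _ [q hq <-] hlt; exists q => //.
rewrite -sqr_norm2 -(sqr_sqrtr d2e0) ltW // ltr_sqr ?nnegrE ?norm2_ge0 ?sqrtr_ge0 //.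
Qed.

Lemma le_sqr_distP z (F G w : R) : 0 <= w ->
  (forall q, P q -> F <= G + w * sqnorm (z - q)) -> F <= G + w * d z ^+ 2.
Proof.
move=> w0 hF; apply/ler_addgt0Pr => e e0.
have w1 : 0 < w + 1 by rewrite ltr_wpDl.
have [q hq hqe] := distP_approx z (divr_gt0 e0 w1).
apply: le_trans (hF q hq) _; rewrite -addrA lerD2l.
apply: le_trans (ler_wpM2l w0 hqe) _; rewrite mulrDr lerD2l.
by rewrite mulrCA ger_pMr ?ler_pdivrMr // mul1r lerDl.
Qed.

Hypothesis unit_rows : forall i, \sum_(j < n) A i j ^+ 2 = 1.

Lemma sqnorm_arow i : sqnorm (arow A i) = 1.
Proof. by rewrite -(unit_rows i); apply: eq_bigr => j _; rewrite !mxE expr2. Qed.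

Lemma pos_residual_le_distP z i : pos ((A *m z - b) i 0) <= d z.
Proof.
rewrite /pos ge_max distP_ge0 andbT.
apply: lb_le_inf => [|_ [q hq <-]]; first exact: dist_set_nonempty.
have := dot_unit_le_norm2 (z - q) (sqnorm_arow i).
by have := hq i; rewrite residualE dotBr mulmx_arow; lra.
Qed.

Lemma posres2_le z : posres2 A b z <= m%:R * d z ^+ 2.
Proof.
have -> : m%:R * d z ^+ 2 = \sum_(i < m) d z ^+ 2.
  by rewrite sumr_const card_ord mulr_natl.
apply: ler_sum => i _.
by rewrite ler_sqr ?nnegrE ?pos_ge0 ?distP_ge0 ?pos_residual_le_distP.
Qed.

Lemma exists_distP_ge1 : (0 < m)%N -> exists z, 1 <= d z.
Proof.
move=> m0; pose i := Ordinal m0; have [q hq] := P_nonempty.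
exists (q + (b i 0 - (A *m q) i 0 + 1) *: arow A i).
apply: le_trans (pos_residual_le_distP _ i); apply: le_trans (le_pos _).
by rewrite residualE dotDr dotZr -mulmx_arow -/(sqnorm _) sqnorm_arow; lra.
Qed.

End Polyhedron.

Section HoffmanConstant.
Variables (R : realType) (m n : nat) (A : 'M[R]_(m, n)) (b : 'cV[R]_m) (L : R).
Hypothesis P_nonempty : exists q, polyhedron A b q.
Hypothesis unit_rows : forall i, \sum_(j < n) A i j ^+ 2 = 1.
Hypothesis hoffman : forall z, distP A b z ^+ 2 <= L ^+ 2 * posres2 A b z.

Lemma hoffman_constant_ge : (0 < m)%N -> 1 <= m%:R * L ^+ 2.
Proof.
move=> m0; have [z dz1] := exists_distP_ge1 P_nonempty unit_rows m0.
have dz2 : 1 <= distP A b z ^+ 2 := exprn_ege1 2 dz1.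
rewrite -(ler_pM2r (lt_le_trans ltr01 dz2)) mul1r mulrAC.
apply: le_trans (hoffman z) _; rewrite mulrC ler_wpM2r ?sqr_ge0 //.
exact: posres2_le.
Qed.

Lemma hoffman_error_bound : (0 < m)%N -> 0 < L ->
  forall z, (m%:R * L ^+ 2)^-1 * m%:R * distP A b z ^+ 2 <= posres2 A b z.
Proof.
move=> m0 L0 z; have L2 : 0 < L ^+ 2 := exprn_gt0 2 L0.
have -> : (m%:R * L ^+ 2)^-1 * m%:R * distP A b z ^+ 2 = distP A b z ^+ 2 / L ^+ 2.
  by field; rewrite (gt_eqF L0) pnatr_eq0 -lt0n m0.
by rewrite ler_pdivrMr // mulrC.
Qed.

End HoffmanConstant.

Section OneStep.
Variables (R : realType) (m n : nat) (A : 'M[R]_(m, n)) (b : 'cV[R]_m).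
Hypothesis P_nonempty : exists q, polyhedron A b q.
Hypothesis unit_rows : forall i, \sum_(j < n) A i j ^+ 2 = 1.
Implicit Types (x v y z q : 'cV[R]_n).
Local Notation P := (polyhedron A b).
Local Notation d := (distP A b).

Lemma residual_le_dot_sub z q i : P q -> (A *m z - b) i 0 <= dot (arow A i) (z - q).
Proof. by move=> hq; have := hq i; rewrite residualE dotBr mulmx_arow; lra. Qed.

Lemma sqr_distP_convex_step z1 z2 q1 q2 i (om t : R) :
  P q1 -> P q2 -> 0 <= om <= 1 ->
  d (om *: z1 + (1 - om) *: z2 - t *: arow A i) ^+ 2 <=
    om * sqnorm (z1 - q1) + (1 - om) * sqnorm (z2 - q2)
    - 2 * t * (om * dot (arow A i) (z1 - q1) + (1 - om) * dot (arow A i) (z2 - q2))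
    + t ^+ 2.
Proof.
move=> hq1 hq2 om01.
have hq := polyhedron_convex hq1 hq2 om01.
apply: le_trans (sqr_distP_le P_nonempty _ hq) _.
have -> : om *: z1 + (1 - om) *: z2 - t *: arow A i - (om *: q1 + (1 - om) *: q2) =
          om *: (z1 - q1) + (1 - om) *: (z2 - q2) - t *: arow A i.
  by apply/matrixP => j l; rewrite !mxE; ring.
rewrite sqnorm_subZ_unit ?sqnorm_arow // [dot _ (_ *: _ + _)]dotDr !(dotZr (arow A i)).
by have := sqnorm_convex (z1 - q1) (z2 - q2) om01; lra.
Qed.

Variables (om gam del c k : R).
Hypotheses (om01 : 0 <= om <= 1) (gam0 : 0 <= gam) (del0 : 0 <= del) (k0 : 0 <= k).
Hypotheses (c_gam : c = gam * k) (c_del : c * (2 * del - del ^+ 2) = gam ^+ 2).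

Lemma paskm_step_bound x v y qv qy i : P qv -> P qy -> v - y = k *: (y - x) ->
  let r := pos ((A *m y - b) i 0) in
  d (om *: v + (1 - om) *: y - (gam * r) *: arow A i) ^+ 2
    + c * d (y - (del * r) *: arow A i) ^+ 2
  <= om * sqnorm (v - qv) + (1 - om + c) * sqnorm (y - qy)
     - (2 * gam + c * om) * r ^+ 2 + c * om * d x ^+ 2.
Proof.
move=> hqv hqy vy /=; set t := (A *m y - b) i 0; set r := pos t; set a := arow A i.
set s := pos ((A *m x - b) i 0); set D := d x.
set ae := dot a (v - qv); set af := dot a (y - qy).
have r0 : 0 <= r := pos_ge0 t.
have c0 : 0 <= c by rewrite c_gam mulr_ge0.
have [om0 om1] := andP om01; have om1' : 0 <= 1 - om by rewrite subr_ge0.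
have hv := @sqr_distP_convex_step v y qv qy i om (gam * r) hqv hqy om01.
have hx : d (y - (del * r) *: a) ^+ 2 <= sqnorm (y - qy) - 2 * (del * r) * af + (del * r) ^+ 2.
  apply: le_trans (sqr_distP_le P_nonempty _ hqy) _.
  have -> : y - (del * r) *: a - qy = y - qy - (del * r) *: a.
    by apply/matrixP => j l; rewrite !mxE; ring.
  by rewrite sqnorm_subZ_unit ?sqnorm_arow.
have hf : r ^+ 2 <= r * af.
  by rewrite -pos_mul_id ler_wpM2l // residual_le_dot_sub.
have he : (1 + k) * r ^+ 2 - k * (r * s) <= r * ae.
  have tx : (A *m x - b) i 0 <= s := le_pos _.
  have tv : t + k * (t - s) <= ae.
    apply: le_trans (residual_le_dot_sub v i hqv).
    have -> : v = y + k *: (y - x) by rewrite -vy addrC subrK.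
    have := ler_wpM2l k0 tx; rewrite /t !residualE dotDr dotZr dotBr; lra.
  have rt : r * t = r ^+ 2 := pos_mul_id t.
  by have := congr1 ( *%R k) rt; have := ler_wpM2l r0 tv; lra.
have hs : 2 * (r * s) <= r ^+ 2 + D ^+ 2.
  have s0 : 0 <= s := pos_ge0 _.
  have sD : s <= D := pos_residual_le_distP P_nonempty unit_rows x i.
  have sD2 : s ^+ 2 <= D ^+ 2 by rewrite ler_sqr ?nnegrE // (le_trans s0 sD).
  by have := sqr_ge0 (r - s); rewrite sqrrB; lra.
have := ler_wpM2l (mulr_ge0 om0 gam0) he.
have := ler_wpM2l (addr_ge0 (mulr_ge0 om1' gam0) (mulr_ge0 c0 del0)) hf.
have := ler_wpM2l c0 hx; have := ler_wpM2l (mulr_ge0 c0 om0) hs.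
(* [c_del] cancels the [r ^+ 2] terms of the two updates. *)
have := congr1 (fun w => w * r ^+ 2) c_del.
by move: hv; rewrite /= -/a -/ae -/af !exprMn c_gam; lra.
Qed.

End OneStep.

Section UniformSubsets.
Variables (m beta : nat).
Local Notation B := (bsubset m beta).

Lemma card_bsubset_gt0 : (beta <= m)%N -> (0 < #|{: B}|)%N.
Proof.
move=> bm; have : (0 < #|[set t : {set 'I_m} | #|t| == beta]%SET|)%N.
  by rewrite card_draws card_ord bin_gt0.
by case/card_gt0P => t; rewrite inE => tb; apply/card_gt0P; exists (exist _ t tb).
Qed.

Definition permute_bsubset (p : {perm 'I_m}) (t : B) : B :=
  exist _ (p @: val t) (eq_ind_r (eq_op^~ beta) (valP t) (card_imset _ (@perm_inj _ p))).

Lemma permute_bsubset_inj p : injective (permute_bsubset p).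
Proof. by move=> t1 t2 /(congr1 val)/(imset_inj (@perm_inj _ p)) /val_inj. Qed.

Definition bsubset_count (i : 'I_m) : nat := #|[pred t : B | i \in val t]|.

Lemma bsubset_count_sym i j : bsubset_count i = bsubset_count j.
Proof.
rewrite /bsubset_count -!sum1_card (reindex_inj (@permute_bsubset_inj (tperm i j))).
by apply: eq_bigl => t; rewrite !inE -{1}(tpermR i j) mem_imset //; exact: perm_inj.
Qed.

Lemma sum_bsubset_count : (\sum_i bsubset_count i = #|{: B}| * beta)%N.
Proof.
rewrite /bsubset_count; under eq_bigr do rewrite -sum1_card big_mkcond.
rewrite exchange_big /= -sum_nat_const; apply: eq_bigr => t _.
by rewrite -big_mkcond sum1_card (eqP (valP t)).
Qed.

Lemma bsubset_countE i : (m * bsubset_count i = #|{: B}| * beta)%N.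
Proof.
rewrite -sum_bsubset_count (eq_bigr (fun _ => bsubset_count i)).
  by rewrite sum_nat_const card_ord.
by move=> j _; exact: bsubset_count_sym.
Qed.

Variable R : realType.

Lemma sum_bsubset_mem (g : 'I_m -> R) :
  \sum_(t : B) \sum_(i in val t) g i = \sum_i g i *+ bsubset_count i.
Proof.
rewrite (exchange_big_dep predT) //=; apply: eq_bigr => i _.
by rewrite sumr_const.
Qed.

Lemma sum_le_sum_bsubset (g : 'I_m -> R) (h : {set 'I_m} -> R) : (0 < beta)%N ->
  (forall tau : {set 'I_m}, #|tau| = beta -> forall i, i \in tau -> g i <= h tau) ->
  #|{: B}|%:R * \sum_i g i <= m%:R * \sum_(t : B) h (val t).
Proof.
move=> b0 gh.
have per_subset (t : B) : \sum_(i in val t) g i <= beta%:R * h (val t).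
  have tb : #|val t| = beta := eqP (valP t).
  apply: le_trans (_ : _ <= \sum_(i in val t) h (val t)) _.
    by apply: ler_sum => i; exact: gh.
  by rewrite sumr_const tb mulr_natl.
have double_count : (#|{: B}| * beta)%:R * \sum_i g i =
                    m%:R * \sum_(t : B) \sum_(i in val t) g i.
  rewrite sum_bsubset_mem !mulr_sumr; apply: eq_bigr => i _.
  by rewrite -(bsubset_countE i) natrM -mulr_natr; ring.
rewrite -(@ler_pM2l _ beta%:R) ?ltr0n // mulrA -natrM mulnC double_count.
rewrite [X in _ <= X]mulrCA ler_wpM2l // mulr_sumr; exact: ler_sum.
Qed.

End UniformSubsets.

Lemma geometric_decay (R : numDomainType) (u : nat -> R) (w : R) :
  0 <= w -> (forall k, u k.+1 <= w * u k) -> forall k, u k <= w ^+ k * u 0%N.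
Proof.
move=> w0 hu; elim=> [|k IH]; first by rewrite expr0 mul1r.
by apply: le_trans (hu k) _; rewrite exprS -mulrA ler_wpM2l.
Qed.

Lemma squeeze_geometric (R : realType) (u : nat -> R) (C w : R) :
  0 <= w < 1 -> (forall k, 0 <= u k <= C * w ^+ k) -> u @ \oo --> 0.
Proof.
move=> /andP[w0 w1] hu.
apply: (@squeeze_cvgr _ _ _ _ (fun=> 0) (geometric C w)).
- exact: nearW.
- exact: cvg_cst.
- by apply: cvg_geometric; rewrite ger0_norm.
Qed.

Section Expectation.
Variables (R : realType) (m n : nat) (A : 'M[R]_(m, n)) (b : 'cV[R]_m)
  (beta : nat) (delta alpha omega gamma : R)
  (sel : nat -> {set 'I_m} -> 'cV[R]_n -> 'I_m) (x0 : 'cV[R]_n).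
Local Notation B := (bsubset m beta).
Local Notation traj := (paskm_traj A b delta alpha omega gamma sel x0).
Local Notation step := (paskm_step A b delta alpha omega gamma sel).
Local Notation E := (paskm_E A b beta delta alpha omega gamma sel x0).
Implicit Types (f g : 'cV[R]_n * 'cV[R]_n -> R).

Lemma paskm_traj_ext (s1 s2 : nat -> {set 'I_m}) K :
  (forall j, (j < K)%N -> s1 j = s2 j) -> traj s1 K = traj s2 K.
Proof.
elim: K => [//|K IH] s12 /=.
by rewrite s12 // IH // => j jK; apply: s12; rewrite ltnS ltnW.
Qed.

Definition ffun_rcons K (p : {ffun 'I_K -> B} * B) : {ffun 'I_K.+1 -> B} :=
  [ffun j => if unlift ord_max j is Some j' then p.1 j' else p.2].

Definition ffun_unrcons K (s : {ffun 'I_K.+1 -> B}) : {ffun 'I_K -> B} * B :=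
  ([ffun j => s (lift ord_max j)], s ord_max).

Lemma ffun_rconsK K : cancel (@ffun_rcons K) (@ffun_unrcons K).
Proof.
move=> [s t]; rewrite /ffun_unrcons /ffun_rcons ffunE unlift_none.
by congr (_, _); apply/ffunP => j; rewrite !ffunE liftK.
Qed.

Lemma ffun_unrconsK K : cancel (@ffun_unrcons K) (@ffun_rcons K).
Proof.
move=> s; apply/ffunP => j; rewrite /ffun_unrcons /ffun_rcons ffunE.
by case: unliftP => [j' ->|->] /=; rewrite ?ffunE.
Qed.

Lemma ext_sample_rcons_lt K (p : {ffun 'I_K -> B} * B) j : (j < K)%N ->
  ext_sample (ffun_rcons p) j = ext_sample p.1 j.
Proof.
move=> jK; have jK1 : (j < K.+1)%N by rewrite ltnS ltnW.
rewrite /ext_sample (insubT (fun j => j < K.+1)%N jK1) (insubT (fun j => j < K)%N jK).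
have -> : Sub j jK1 = lift ord_max (Sub j jK : 'I_K).
  by apply: val_inj; rewrite /= /bump leqNgt jK.
by rewrite /ffun_rcons ffunE liftK.
Qed.

Lemma ext_sample_rcons_last K (p : {ffun 'I_K -> B} * B) :
  ext_sample (ffun_rcons p) K = val p.2.
Proof.
rewrite /ext_sample (insubT (fun j => j < K.+1)%N (ltnSn K)).
have -> : Sub K (ltnSn K) = ord_max :> 'I_K.+1 by apply: val_inj.
by rewrite /ffun_rcons ffunE unlift_none.
Qed.

(* The last sample is uniform and independent of the first [K] ones. *)
Lemma sum_traj_succ K f :
  \sum_(s : {ffun 'I_K.+1 -> B}) f (traj (ext_sample s) K.+1) =
  \sum_(s : {ffun 'I_K -> B}) \sum_(t : B) f (step K (val t) (traj (ext_sample s) K)).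
Proof.
rewrite (reindex (@ffun_rcons K)) /=; last first.
  by exists (@ffun_unrcons K) => s _; [exact: ffun_rconsK | exact: ffun_unrconsK].
rewrite pair_bigA; apply: eq_bigr => -[s t] _ /=.
rewrite ext_sample_rcons_last; congr (f (step _ _ _)).
by apply: paskm_traj_ext => j jK; rewrite ext_sample_rcons_lt.
Qed.

Lemma paskm_E_avg K f : E K f =
  (\sum_(s : {ffun 'I_K -> B}) f (traj (ext_sample s) K)) / (#|{: B}| ^ K)%:R.
Proof. by rewrite /paskm_E card_ffun card_ord. Qed.

Lemma paskm_E0 f : E 0 f = f (x0, x0).
Proof.
rewrite paskm_E_avg expn0 divr1 (big_pred1 (@ffun0 _ (fun=> B) (card_ord 0))) //.
by move=> s; apply/esym/eqP/ffunP => -[].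
Qed.

Lemma ler_paskm_E K f g : (forall st, f st <= g st) -> E K f <= E K g.
Proof.
by move=> fg; rewrite !paskm_E_avg ler_wpM2r ?invr_ge0 ?ler0n //; apply: ler_sum.
Qed.

Lemma paskm_E_ge0 K f : (forall st, 0 <= f st) -> 0 <= E K f.
Proof. by move=> f0; rewrite paskm_E_avg divr_ge0 ?sumr_ge0. Qed.

Lemma paskm_EZ K (c : R) f : E K (fun st => c * f st) = c * E K f.
Proof. by rewrite !paskm_E_avg -mulr_sumr mulrA. Qed.

Lemma paskm_E_step K f g (w : R) : (0 < #|{: B}|)%N ->
  (forall st, \sum_(t : B) f (step K (val t) st) <= #|{: B}|%:R * (w * g st)) ->
  E K.+1 f <= w * E K g.
Proof.
move=> B0 fg; rewrite !paskm_E_avg sum_traj_succ expnSr natrM.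
set N := #|{: B}|%:R; set NK := (#|{: B}| ^ K)%:R.
have N0 : 0 < N by rewrite ltr0n.
have NK0 : 0 < NK by rewrite ltr0n expn_gt0 B0.
have -> : w * ((\sum_(s : {ffun 'I_K -> B}) g (traj (ext_sample s) K)) / NK) =
          N * (w * \sum_(s : {ffun 'I_K -> B}) g (traj (ext_sample s) K)) / (NK * N).
  by field; rewrite (gt_eqF N0) (gt_eqF NK0).
rewrite ler_wpM2r ?invr_ge0 ?(mulr_ge0 (ltW NK0) (ltW N0)) // !mulr_sumr.
by apply: ler_sum => s _; exact: fg.
Qed.

Lemma paskm_E_cvg0 (f g : 'cV[R]_n * 'cV[R]_n -> R) (c w C : R) :
  0 < c -> 0 <= w < 1 -> (forall st, 0 <= f st) -> (forall st, c * f st <= g st) ->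
  (forall K, E K g <= w ^+ K * C) -> (fun K => E K f) @ \oo --> 0.
Proof.
move=> c0 w01 f0 fg Eg; apply: (squeeze_geometric (C := C / c)) w01 _ => K.
rewrite paskm_E_ge0 //= mulrAC ler_pdivlMr // mulrC -paskm_EZ.
by rewrite mulrC; apply: le_trans (Eg K); exact: ler_paskm_E.
Qed.

End Expectation.

Definition lyapunov (R : realType) m n (A : 'M[R]_(m, n)) (b : 'cV[R]_m) (c : R)
  (st : 'cV[R]_n * 'cV[R]_n) : R :=
  distP A b st.2 ^+ 2 + c * distP A b st.1 ^+ 2.

Section Descent.
Variables (R : realType) (m n : nat) (A : 'M[R]_(m, n)) (b : 'cV[R]_m).
Hypothesis P_nonempty : exists q, polyhedron A b q.
Hypothesis unit_rows : forall i, \sum_(j < n) A i j ^+ 2 = 1.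
Variables (beta : nat) (sel : nat -> {set 'I_m} -> 'cV[R]_n -> 'I_m).
Hypothesis beta_range : (1 <= beta <= m)%N.
Hypothesis sel_max : forall k (tau : {set 'I_m}) y, #|tau| = beta ->
  sel k tau y \in tau /\
  forall i, i \in tau -> pos ((A *m y - b) i 0) <= pos ((A *m y - b) (sel k tau y) 0).
Variables (om gam del c k al mu : R).
Hypotheses (om01 : 0 <= om <= 1) (gam0 : 0 <= gam) (del0 : 0 <= del) (k0 : 0 <= k).
Hypotheses (c_gam : c = gam * k) (c_del : c * (2 * del - del ^+ 2) = gam ^+ 2).
Hypothesis al_k : 1 - al = k * al.
Hypothesis rate_balance : 1 - om + c = (2 * gam + c * om) * mu.
Hypothesis error_bound : forall z, mu * m%:R * distP A b z ^+ 2 <= posres2 A b z.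
Local Notation B := (bsubset m beta).
Local Notation d := (distP A b).

Lemma sum_sqr_pos_selected (K : nat) y :
  #|{: B}|%:R * (mu * d y ^+ 2) <= \sum_(t : B) pos ((A *m y - b) (sel K (val t) y) 0) ^+ 2.
Proof.
have [b0 bm] := andP beta_range; have m0 : (0 : R) < m%:R by rewrite ltr0n (leq_trans b0).
rewrite -(ler_pM2l m0) [X in X <= _](_ : _ = #|{: B}|%:R * (mu * m%:R * d y ^+ 2)).
  2: by ring.
apply: le_trans (ler_wpM2l (ler0n _ _) (error_bound y)) _.
apply: (sum_le_sum_bsubset (g := fun i => pos ((A *m y - b) i 0) ^+ 2)
                           (h := fun tau => pos ((A *m y - b) (sel K tau y) 0) ^+ 2)) => //.
move=> tau tb i itau.
have [_ imax] := sel_max K y tb.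
by rewrite ler_sqr ?nnegrE ?pos_ge0 ?imax.
Qed.

Lemma paskm_step_contraction K x v :
  \sum_(t : B) lyapunov A b c (paskm_step A b del al om gam sel K (val t) (x, v))
  <= #|{: B}|%:R * (om * lyapunov A b c (x, v)).
Proof.
rewrite /lyapunov /paskm_step /=; set y := al *: v + (1 - al) *: x.
have vy : v - y = k *: (y - x).
  apply/matrixP => i j; rewrite /y !mxE.
  by transitivity ((1 - al) * (v i j - x i j)); [ring | rewrite {1}al_k; ring].
set N := #|{: bsubset m beta}|%:R; have N0 : 0 <= N := ler0n _ _.
have c0 : 0 <= c by rewrite c_gam mulr_ge0.
have [om0 om1] := andP om01; have om1' : 0 <= 1 - om by rewrite subr_ge0.
rewrite [X in _ <= X](_ : _ = N * (c * om * d x ^+ 2) + N * om * d v ^+ 2).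
  2: by ring.
apply: (le_sqr_distP P_nonempty (G := N * (c * om * d x ^+ 2)) (w := N * om)).
  exact: mulr_ge0.
move=> qv qv_P.
set G := N * (om * sqnorm (v - qv) + c * om * d x ^+ 2) - N * (1 - om + c) * d y ^+ 2.
rewrite [X in _ <= X](_ : _ = G + N * (1 - om + c) * d y ^+ 2).
  2: by rewrite /G; ring.
apply: (le_sqr_distP P_nonempty (G := G) (w := N * (1 - om + c))).
  exact: mulr_ge0 N0 (addr_ge0 om1' c0).
move=> qy qy_P.
apply: le_trans (ler_sum _ (fun t _ => paskm_step_bound P_nonempty unit_rows om01 gam0 del0 k0
  c_gam c_del (sel K (val t) y) qv_P qy_P vy)) _.
under eq_bigr => t _ do rewrite addrAC.
rewrite sumrB sumr_const -mulr_sumr -[_ *+ #|_|]mulr_natr -/N.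
have avg := sum_sqr_pos_selected K y; rewrite -/N in avg.
have := ler_wpM2l (addr_ge0 (mulr_ge0 (ler0n _ 2) gam0) (mulr_ge0 c0 om0)) avg.
(* [rate_balance] makes the [d y ^+ 2] terms cancel. *)
have := congr1 (fun w => N * w * d y ^+ 2) rate_balance.
by rewrite /G; clearbody N y; lra.
Qed.

End Descent.

Definition paskm_rate (R : realType) (mu zeta gamma : R) : R :=
  1 - (zeta * mu ^+ 2 + 2 * gamma * mu - zeta * mu) / (1 + zeta * mu ^+ 2).

Lemma paskm_eta_bounds (R : realType) (delta : R) :
  0 < delta < 2 -> 0 < 2 * delta - delta ^+ 2 <= 1.
Proof. by move=> /andP[d0 d2]; have := sqr_ge0 (delta - 1); rewrite sqrrB; nra. Qed.

Section Rate.
Variables (R : realType) (mu eta zeta gamma : R).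
Hypotheses (mu0 : 0 < mu) (zeta0 : 0 < zeta) (gamma0 : 0 < gamma).
Hypothesis sqr_gamma : gamma ^+ 2 = zeta * eta * mu.
Local Notation omega := (paskm_rate mu zeta gamma).

Let den_gt0 : 0 < 1 + zeta * mu ^+ 2.
Proof. by rewrite ltr_wpDr // mulr_ge0 ?sqr_ge0 ?ltW. Qed.

(* [omega < 1] iff [zeta * (1 - mu) < 2 * gamma]; the bound on [zeta] is its square. *)
Lemma paskm_rate_lt1 : (mu < 1 -> zeta < 4 * eta * mu / (1 - mu) ^+ 2) -> omega < 1.
Proof.
move=> zeta_small; rewrite /paskm_rate gtrBl divr_gt0 //.
suff : zeta * (1 - mu) < 2 * gamma by rewrite -subr_gt0 => /(mulr_gt0 mu0); lra.
have [mu1|mu1] := ltrP mu 1; last first.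
  have : zeta * (1 - mu) <= 0 by rewrite mulr_ge0_le0 ?(ltW zeta0) // subr_le0.
  by move/le_lt_trans; apply; rewrite mulr_gt0.
have h1m : 0 < (1 - mu) ^+ 2 by rewrite exprn_gt0 // subr_gt0.
have := zeta_small mu1; rewrite ltr_pdivlMr // => hz.
have s0 : 0 <= zeta * (1 - mu) by rewrite mulr_ge0 ?(ltW zeta0) // subr_ge0 ltW.
rewrite -ltr_sqr ?nnegrE ?(mulr_ge0 (ler0n _ 2) (ltW gamma0)) // !exprMn sqr_gamma.
by rewrite -(ltr_pM2l zeta0) in hz; lra.
Qed.

Lemma paskm_rate_ge0 : mu <= 1 -> eta <= 1 -> 0 <= omega.
Proof.
move=> mu1 eta1; rewrite /paskm_rate subr_ge0 ler_pdivrMr // mul1r.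
have : gamma ^+ 2 <= zeta * mu.
  by rewrite sqr_gamma -[X in _ <= X]mulr1 mulrAC ler_wpM2l // mulr_ge0 // ltW.
have : 0 <= gamma * (1 - mu) by rewrite mulr_ge0 ?(ltW gamma0) // subr_ge0.
by have := sqr_ge0 (1 - gamma); rewrite sqrrB; lra.
Qed.

Lemma paskm_rate_balance :
  1 - omega + zeta * mu = (2 * gamma + zeta * mu * omega) * mu.
Proof. by rewrite /paskm_rate; field; rewrite gt_eqF. Qed.

End Rate.

Section ContractionInExpectation.
Variables (R : realType) (m n : nat) (A : 'M[R]_(m, n)) (b : 'cV[R]_m).
Hypothesis P_nonempty : exists q, polyhedron A b q.
Hypothesis unit_rows : forall i, \sum_(j < n) A i j ^+ 2 = 1.
Variables (beta : nat) (sel : nat -> {set 'I_m} -> 'cV[R]_n -> 'I_m) (x0 : 'cV[R]_n).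
Hypothesis beta_range : (1 <= beta <= m)%N.
Hypothesis sel_max : forall k (tau : {set 'I_m}) y, #|tau| = beta ->
  sel k tau y \in tau /\
  forall i, i \in tau -> pos ((A *m y - b) i 0) <= pos ((A *m y - b) (sel k tau y) 0).
Variables (mu delta eta zeta gamma : R).
Hypothesis error_bound : forall z, mu * m%:R * distP A b z ^+ 2 <= posres2 A b z.
Hypotheses (delta02 : 0 < delta < 2) (zeta0 : 0 < zeta) (gamma0 : 0 < gamma).
Hypothesis eta_def : eta = 2 * delta - delta ^+ 2.
Hypothesis sqr_gamma : gamma ^+ 2 = zeta * eta * mu.
Hypothesis rate01 : 0 <= paskm_rate mu zeta gamma <= 1.
Local Notation omega := (paskm_rate mu zeta gamma).
Local Notation E := (paskm_E A b beta delta (eta / (eta + gamma)) omega gamma sel x0).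

Lemma paskm_E_contraction K :
  E K.+1 (lyapunov A b (zeta * mu)) <= omega * E K (lyapunov A b (zeta * mu)).
Proof.
have /andP[eta0 _] := paskm_eta_bounds delta02; rewrite -eta_def in eta0.
apply: paskm_E_step => [|[x v]]; first by apply: card_bsubset_gt0; case/andP: beta_range.
apply: (paskm_step_contraction P_nonempty unit_rows beta_range sel_max
         (k := gamma / eta) (mu := mu)) => //.
- exact: ltW.
- by case/andP: delta02 => /ltW.
- exact: divr_ge0 (ltW gamma0) (ltW eta0).
- by rewrite mulrA -expr2 sqr_gamma; field; rewrite gt_eqF.
- by rewrite -eta_def sqr_gamma; ring.
- by field; rewrite (gt_eqF eta0) (gt_eqF (addr_gt0 eta0 gamma0)).
- exact: paskm_rate_balance.
Qed.

End ContractionInExpectation.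

Theorem theorem8 (R : realType) (m n : nat)
  (A : 'M[R]_(m, n)) (b : 'cV[R]_m) (beta : nat) (L : R)
  (delta zeta : R) (x0 : 'cV[R]_n)
  (sel : nat -> {set 'I_m} -> 'cV[R]_n -> 'I_m) :
  (forall i : 'I_m, \sum_(j < n) (A i j) ^+ 2 = 1) ->
  (exists x : 'cV[R]_n, polyhedron A b x) ->
  (1 <= beta <= m)%N ->
  0 < L ->
  (forall x : 'cV[R]_n, distP A b x ^+ 2 <= L ^+ 2 * posres2 A b x) ->
  (* i*_k is a maximizer of (a_i^T y - b_i)^+ over tau_k *)
  (forall k (tau : {set 'I_m}) (y : 'cV[R]_n), #|tau| = beta ->
     sel k tau y \in tau /\
     forall i, i \in tau ->
       pos ((A *m y - b) i 0) <= pos ((A *m y - b) (sel k tau y) 0)) ->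
  0 < delta < 2 ->
  let mu1 := (m%:R * L ^+ 2)^-1 in
  let eta := 2 * delta - delta ^+ 2 in
  0 < zeta ->
  (mu1 < 1 -> zeta < 4 * eta * mu1 / (1 - mu1) ^+ 2) ->
  let gamma := Num.sqrt (zeta * eta * mu1) in
  let alpha := eta / (eta + gamma) in
  let omega := 1 - (zeta * mu1 ^+ 2 + 2 * gamma * mu1 - zeta * mu1)
                   / (1 + zeta * mu1 ^+ 2) in
  let E := paskm_E A b beta delta alpha omega gamma sel x0 in
  let d := distP A b in
  (* linear rate omega < 1 *)
  omega < 1 /\
  (* convergence: E d(x_k,P)^2 -> 0 and E d(v_k,P)^2 -> 0 *)
  (fun k => E k (fun st => d st.1 ^+ 2)) @ \oo --> (0 : R) /\
  (fun k => E k (fun st => d st.2 ^+ 2)) @ \oo --> (0 : R) /\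
  (forall k : nat,
     E k.+1 (fun st => d st.2 ^+ 2 + zeta * mu1 * d st.1 ^+ 2)
       <= omega ^+ k.+1 * E 0%N (fun st => d st.2 ^+ 2 + zeta * mu1 * d st.1 ^+ 2)) /\
  E 0%N (fun st => d st.2 ^+ 2 + zeta * mu1 * d st.1 ^+ 2)
    = (1 + zeta * mu1) * d x0 ^+ 2.
Proof.
move=> unit_rows P_nonempty beta_range L0 hoffman sel_max delta02 mu1 eta zeta0
  zeta_small gamma alpha omega E d.
have m0 : (0 < m)%N by case/andP: beta_range => b0 bm; exact: leq_trans bm.
have mL0 : 0 < m%:R * L ^+ 2 by rewrite mulr_gt0 ?ltr0n ?exprn_gt0.
have mu0 : 0 < mu1 by rewrite invr_gt0.
have mu_le1 : mu1 <= 1 by rewrite invf_le1 // (hoffman_constant_ge P_nonempty).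
have /andP[eta0 eta1] := paskm_eta_bounds delta02.
have gamma0 : 0 < gamma by rewrite sqrtr_gt0 !mulr_gt0.
have sqr_gamma : gamma ^+ 2 = zeta * eta * mu1 by rewrite sqr_sqrtr // ltW // !mulr_gt0.
have omega1 : omega < 1 := paskm_rate_lt1 mu0 zeta0 gamma0 sqr_gamma zeta_small.
have omega0 : 0 <= omega := paskm_rate_ge0 mu0 zeta0 gamma0 sqr_gamma mu_le1 eta1.
have omega01 : 0 <= omega < 1 by rewrite omega0.
have rate01 : 0 <= omega <= 1 by rewrite omega0 ltW.
have decay := geometric_decay omega0 (paskm_E_contraction P_nonempty unit_rows x0
  beta_range sel_max (hoffman_error_bound hoffman m0 L0) delta02 zeta0 gamma0
  (erefl _) sqr_gamma rate01).
split=> //; split; [|split; [|split=> //]].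
- apply: (paskm_E_cvg0 (mulr_gt0 zeta0 mu0) omega01 _ _ decay) => st.
    exact: sqr_ge0.
  by rewrite lerDr sqr_ge0.
- apply: (paskm_E_cvg0 ltr01 omega01 _ _ decay) => st; first exact: sqr_ge0.
  by rewrite mul1r lerDl mulr_ge0 ?sqr_ge0 // ltW // mulr_gt0.
- by rewrite /E paskm_E0 /=; ring.
Qed.
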